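(* Let $\mathbf{s}=\{1/n : n\in\mathbb{N}\}\cup\{0\}\subset\mathbb{R}$ with the topology induced from $\mathbb{R}$, and let $L(\mathbf{s})$ be the free locally convex space over $\mathbf{s}$. Then $L(\mathbf{s})$ is not a Mackey space. Consequently, $L(\mathbf{s})$ (regarded as an abelian topological group) is not a Mackey group.
   Context: All vector spaces are real. For a Tychonoff space $X$, the free locally convex space $L(X)$ is a locally convex space together with a continuous map $i:X\to L(X)$ such that every continuous map $f$ from $X$ into a locally convex space $E$ extends uniquely to a continuous linear operator $\bar f:L(X)\to E$ with $f=\bar f\circ i$; algebraically $L(X)$ is the free vector space on $X$. A locally convex vector topology $\nu$ on a vector space $E$ is compatible with a locally convex topology $\tau$ if $(E,\tau)$ and $(E,\nu)$ have the same continuous linear functionals. A locally convex space $(E,\tau)$ is a Mackey space if $\tau$ is the finest locally convex vector topology on $E$ compatible with $\tau$. Let $\mathbb{S}$ be the unit circle group and $\mathbb{S}_+=\{z\in\mathbb{S}:\mathrm{Re}(z)\ge 0\}$. For an abelian topological group $G$, $\widehat{G}$ denotes the group of continuous homomorphisms $G\to\mathbb{S}$ (characters). A subset $A\subseteq G$ is quasi-convex if for every $g\in G\setminus A$ there is $\chi\in\widehat G$ with $\chi(A)\subseteq\mathbb{S}_+$ and $\chi(g)\notin\mathbb{S}_+$. $G$ is locally quasi-convex if it has a neighborhood base at $0$ of quasi-convex sets. Two group topologies on an abelian group are compatible if they yield the same group of continuous characters. A locally quasi-convex abelian group $(G,\mu)$ is a Mackey group if every locally quasi-convex group topology $\nu$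 on $G$ compatible with $\mu$ satisfies $\nu\le\mu$. *)

From Stdlib Require Import Reals Lra.
Open Scope R_scope.

Record topology (T : Type) := {
  open : (T -> Prop) -> Prop;
  open_full : open (fun _ => True);
  open_inter : forall U V, open U -> open V -> open (fun x => U x /\ V x);
  open_union : forall (I : Type) (F : I -> T -> Prop),
      (forall i, open (F i)) -> open (fun x => exists i, F i x)
}.
Arguments open {T} _ _.

Definition coarser {T} (tau1 tau2 : topology T) : Prop :=
  forall U, open tau1 U -> open tau2 U.

Definition continuous {A B} (ta : topology A) (tb : topology B) (f : A -> B) : Prop :=
  forall V, open tb V -> open ta (fun x => V (f x)).

Definition nbhd {T} (t : topology T) (N : T -> Prop) (x : T) : Prop :=
  exists U, open t U /\ U x /\ (forall y, U y -> N y).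

Definition R_open (U : R -> Prop) : Prop :=
  forall x, U x -> exists eps, eps > 0 /\ forall y, Rabs (y - x) < eps -> U y.

Definition R_topology : topology R.
Proof.
  refine {| open := R_open |}.
  - intros x _. exists 1. split; [lra|]. auto.
  - intros U V HU HV x [Ux Vx].
    destruct (HU x Ux) as [e1 [He1 H1]]; destruct (HV x Vx) as [e2 [He2 H2]].
    exists (Rmin e1 e2). split; [apply Rmin_pos; assumption|].
    intros y Hy. split; [apply H1 | apply H2];
      eapply Rlt_le_trans; eauto; [apply Rmin_l | apply Rmin_r].
  - intros I F HF x [i Hi]. destruct (HF i x Hi) as [e [He H]].
    exists e. split; auto. intros y Hy. exists i. auto.
Defined.

Definition in_s (x : R) : Prop :=
  x = 0 \/ exists n : nat, (1 <= n)%nat /\ x = / INR n.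

Definition s_pt : Type := { x : R | in_s x }.

Definition s_topology : topology s_pt.
Proof.
  refine {| open := fun U : s_pt -> Prop =>
              exists V, R_open V /\ forall x : s_pt, U x <-> V (proj1_sig x) |}.
  - exists (fun _ => True). split; [apply (open_full _ R_topology)|]. tauto.
  - intros U V [U' [HU' EU]] [V' [HV' EV]].
    exists (fun x => U' x /\ V' x). split.
    + apply (open_inter _ R_topology); assumption.
    + intro x. rewrite EU, EV. tauto.
  - intros I F HF.
    exists (fun r => exists i, exists V, R_open V /\ (forall x : s_pt, F i x <-> V (proj1_sig x)) /\ V r).
    split.
    + intros r [i [V [HV [EV Vr]]]]. destruct (HV r Vr) as [e [He H]].
      exists e. split; auto. intros y Hy. exists i, V. auto.
    + intro x. split.
      * intros [i Hi]. destruct (HF i) as [V [HV EV]]. exists i, V.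
        split; [exact HV|]. split; [exact EV|]. apply EV; exact Hi.
      * intros [i [V [HV [EV Vr]]]]. exists i. apply EV. auto.
Defined.

Record vector_space (E : Type) := {
  vzero : E;
  vadd : E -> E -> E;
  vopp : E -> E;
  vscal : R -> E -> E;
  vadd_assoc : forall x y z, vadd x (vadd y z) = vadd (vadd x y) z;
  vadd_comm : forall x y, vadd x y = vadd y x;
  vadd_0 : forall x, vadd x vzero = x;
  vadd_opp : forall x, vadd x (vopp x) = vzero;
  vscal_1 : forall x, vscal 1 x = x;
  vscal_assoc : forall a b x, vscal a (vscal b x) = vscal (a * b) x;
  vscal_distr_v : forall a x y, vscal a (vadd x y) = vadd (vscal a x) (vscal a y);
  vscal_distr_s : forall a b x, vscal (a + b) x = vadd (vscal a x) (vscal b x)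
}.
Arguments vzero {E} _.
Arguments vadd {E} _ _ _.
Arguments vopp {E} _ _.
Arguments vscal {E} _ _ _.

Definition linear {E F} (VE : vector_space E) (VF : vector_space F) (g : E -> F) : Prop :=
  (forall x y, g (vadd VE x y) = vadd VF (g x) (g y)) /\
  (forall a x, g (vscal VE a x) = vscal VF a (g x)).

Definition linear_functional {E} (VE : vector_space E) (f : E -> R) : Prop :=
  (forall x y, f (vadd VE x y) = f x + f y) /\ (forall a x, f (vscal VE a x) = a * f x).

Definition convex {E} (VE : vector_space E) (C : E -> Prop) : Prop :=
  forall x y t, C x -> C y -> 0 <= t <= 1 ->
    C (vadd VE (vscal VE t x) (vscal VE (1 - t) y)).

Definition add_continuous {E} (VE : vector_space E) (t : topology E) : Prop :=
  forall x y W, open t W -> W (vadd VE x y) ->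
    exists U V, open t U /\ U x /\ open t V /\ V y /\
      forall u v, U u -> V v -> W (vadd VE u v).

Definition scal_continuous {E} (VE : vector_space E) (t : topology E) : Prop :=
  forall a x W, open t W -> W (vscal VE a x) ->
    exists delta U, delta > 0 /\ open t U /\ U x /\
      forall b u, Rabs (b - a) < delta -> U u -> W (vscal VE b u).

Definition vector_topology {E} (VE : vector_space E) (t : topology E) : Prop :=
  add_continuous VE t /\ scal_continuous VE t.

Definition locally_convex {E} (VE : vector_space E) (t : topology E) : Prop :=
  vector_topology VE t /\
  forall W, open t W -> W (vzero VE) ->
    exists N, convex VE N /\ nbhd t N (vzero VE) /\ forall y, N y -> W y.

Definition free_lcs {X E} (tX : topology X) (VE : vector_space E) (t : topology E)
    (i : X -> E) : Prop :=
  locally_convex VE t /\ continuous tX t i /\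
  forall (F : Type) (VF : vector_space F) (tF : topology F),
    locally_convex VF tF ->
    forall f : X -> F, continuous tX tF f ->
      exists g : E -> F,
        (linear VE VF g /\ continuous t tF g /\ forall x, g (i x) = f x) /\
        (forall h : E -> F, linear VE VF h -> continuous t tF h ->
           (forall x, h (i x) = f x) -> forall v, h v = g v).

Definition lc_compatible {E} (VE : vector_space E) (tau nu : topology E) : Prop :=
  forall f : E -> R, linear_functional VE f ->
    (continuous tau R_topology f <-> continuous nu R_topology f).

Definition mackey_space {E} (VE : vector_space E) (tau : topology E) : Prop :=
  forall nu : topology E, locally_convex VE nu -> lc_compatible VE tau nu ->
    coarser nu tau.

(* The circle group S is represented as the unit circle in R x R = C. *)
Definition cmul (z w : R * R) : R * R :=
  (fst z * fst w - snd z * snd w, fst z * snd w + snd z * fst w).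

Definition cdist (z w : R * R) : R :=
  sqrt ((fst z - fst w) ^ 2 + (snd z - snd w) ^ 2).

Definition group_topology {E} (VE : vector_space E) (t : topology E) : Prop :=
  add_continuous VE t /\ continuous t t (vopp VE).

Definition character {E} (VE : vector_space E) (t : topology E) (chi : E -> R * R) : Prop :=
  (forall x, fst (chi x) ^ 2 + snd (chi x) ^ 2 = 1) /\
  (forall x y, chi (vadd VE x y) = cmul (chi x) (chi y)) /\
  (forall x eps, eps > 0 -> exists U, open t U /\ U x /\
      forall y, U y -> cdist (chi y) (chi x) < eps).

(* S_+ = {z in S : Re z >= 0} *)
Definition quasi_convex {E} (VE : vector_space E) (t : topology E) (A : E -> Prop) : Prop :=
  forall g, ~ A g -> exists chi, character VE t chi /\
    (forall a, A a -> 0 <= fst (chi a)) /\ ~ (0 <= fst (chi g)).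

Definition locally_quasi_convex {E} (VE : vector_space E) (t : topology E) : Prop :=
  forall W, open t W -> W (vzero VE) ->
    exists N, quasi_convex VE t N /\ nbhd t N (vzero VE) /\ forall y, N y -> W y.

Definition group_compatible {E} (VE : vector_space E) (mu nu : topology E) : Prop :=
  forall chi, character VE mu chi <-> character VE nu chi.

Definition mackey_group {E} (VE : vector_space E) (mu : topology E) : Prop :=
  forall nu : topology E, group_topology VE nu -> locally_quasi_convex VE nu ->
    group_compatible VE mu nu -> coarser nu mu.

(* Let [coeff n] be the continuous functional on L(s) reading off the coefficient of the
   isolated point [1 / (n + 1)]. Every vector is a finite combination of points of s, so
   its coefficient sequence is bounded, and adding the seminorm [sup_n |coeff n|] to the
   topology tau gives a locally convex topology nu finer than tau. The differences
   [d_n = delta_(1 / (n + 1)) - delta_0] tend to 0 for tau but have [sup]-seminorm 1, so nu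
   is strictly finer. Yet nu has the same continuous functionals: if a nu-continuous [f]
   had [|f d_n| >= eps] infinitely often, sums [+- d_(n_1) +- ... +- d_(n_k)] over widely
   spaced indices would keep every coefficient in [[-1, 1]] and the finitely many relevant
   tau-seminorms of order [k eta], while [f] grows like [k eps]; scaling by [1 / k]
   contradicts continuity at 0. Hence tau is not Mackey. For the group statement, the
   characters of a topological vector space are exactly the maps [exp (2 pi i f)] with [f]
   a continuous functional, so nu is also group-compatible with tau, and nu is locally
   quasi-convex because its seminorm balls are polars of sets of functionals. *)

From Pilot Require Import Defs.
From Stdlib Require Import Reals Lra Lia ZArith List Classical ClassicalEpsilon
  FunctionalExtensionality PropExtensionality ProofIrrelevance.
Open Scope R_scope.

Lemma open_ext {T} (t : topology T) (P Q : T -> Prop) :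
  (forall x, P x <-> Q x) -> open t P -> open t Q.
Proof.
  intros H HP. replace Q with P; [exact HP|].
  apply functional_extensionality; intro x; apply propositional_extensionality, H.
Qed.

Lemma open_local {T} (t : topology T) (P : T -> Prop) :
  (forall x, P x -> exists U, open t U /\ U x /\ forall y, U y -> P y) -> open t P.
Proof.
  intros H.
  apply (open_ext t (fun x => exists U : {U : T -> Prop | open t U /\ forall y, U y -> P y},
                                 proj1_sig U x)).
  - intro x; split.
    + intros [U Ux]. exact (proj2 (proj2_sig U) x Ux).
    + intro Px. destruct (H x Px) as [U [HU [Ux HUP]]].
      exists (exist _ U (conj HU HUP)). exact Ux.
  - apply open_union. intros U. exact (proj1 (proj2_sig U)).
Qed.

Lemma open_empty {T} (t : topology T) : open t (fun _ => False).
Proof.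
  apply (open_ext t (fun x => exists j : False, True)).
  - intro x; split; [intros [[] _] | tauto].
  - apply (open_union _ t False (fun _ _ => True)). intros [].
Qed.

Lemma open_all {T} (t : topology T) (P : T -> Prop) : (forall x, P x) -> open t P.
Proof. intro H. apply (open_ext t (fun _ => True)); [firstorder | apply open_full]. Qed.

Lemma continuous_comp {A B C} (ta : topology A) (tb : topology B) (tc : topology C)
  (f : A -> B) (g : B -> C) :
  continuous ta tb f -> continuous tb tc g -> continuous ta tc (fun x => g (f x)).
Proof. intros Hf Hg V HV. exact (Hf _ (Hg V HV)). Qed.

Definition indiscrete (T : Type) : topology T.
Proof.
  refine {| open := fun U : T -> Prop => (forall x, U x) \/ (forall x, ~ U x) |}.
  - left; auto.
  - intros U V [HU|HU] [HV|HV]; [left; auto | right; firstorder ..].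
  - intros I F HF. destruct (classic (exists j x, F j x)) as [[j [x Hx]]|Hn].
    + left. intro y. exists j. destruct (HF j) as [Hf|He]; [apply Hf | exfalso; exact (He x Hx)].
    + right. intros x [j Hj]. apply Hn; eauto.
Defined.

Lemma continuous_indiscrete {A B} (ta : topology A) (f : A -> B) :
  continuous ta (indiscrete B) f.
Proof.
  intros V [HV|HV].
  - apply open_all. intro; apply HV.
  - apply (open_ext ta (fun _ => False)); [firstorder | apply open_empty].
Qed.

Lemma indiscrete_locally_convex {E} (VE : vector_space E) :
  locally_convex VE (indiscrete E).
Proof.
  split; [split|].
  - intros x y W [HW|HW] Wxy; [|exfalso; exact (HW _ Wxy)].
    exists (fun _ => True), (fun _ => True). repeat split; try (left; auto). intros; apply HW.
  - intros a x W [HW|HW] Wx; [|exfalso; exact (HW _ Wx)].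
    exists 1, (fun _ => True). repeat split; try lra; try (left; auto). intros; apply HW.
  - intros W [HW|HW] W0; [|exfalso; exact (HW _ W0)].
    exists (fun _ => True). repeat split.
    + exists (fun _ => True). repeat split. left; auto.
    + intros; apply HW.
Qed.

Definition R_vspace : vector_space R.
Proof.
  refine {| vzero := 0; vadd := Rplus; vopp := Ropp; vscal := Rmult |}; intros; ring.
Defined.

Lemma R_ball_open (c e : R) : R_open (fun y => Rabs (y - c) < e).
Proof.
  intros x Hx. exists (e - Rabs (x - c)). split; [lra|].
  intros y Hy. pose proof (Rabs_triang (y - x) (x - c)).
  replace (y - c) with ((y - x) + (x - c)) by ring. lra.
Qed.

Lemma Rabs_scal_diff (a b u x : R) :
  Rabs (b * u - a * x) <= Rabs b * Rabs (u - x) + Rabs (b - a) * Rabs x.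
Proof.
  replace (b * u - a * x) with (b * (u - x) + (b - a) * x) by ring.
  rewrite <- !Rabs_mult. apply Rabs_triang.
Qed.

(* The choice of [delta] and of the radius [r] making [(b, u) |-> b * u] continuous at
   [(a, x)] when [|u - x| <= r] and [|x| <= M]. *)
Lemma scal_continuity_bound (a b M r eps : R) :
  eps > 0 -> 0 <= M -> 0 <= r ->
  Rabs (b - a) < Rmin 1 (eps / (2 * (M + 1))) ->
  r < eps / (2 * (Rabs a + 1)) ->
  Rabs b * r + Rabs (b - a) * M < eps.
Proof.
  intros He HM Hr Hb Hr2.
  pose proof (Rmin_l 1 (eps / (2 * (M + 1)))) as H1.
  pose proof (Rmin_r 1 (eps / (2 * (M + 1)))) as H2.
  assert (Hbb : Rabs b <= Rabs a + 1).
  { pose proof (Rabs_triang (b - a) a). replace (b - a + a) with b in H by ring. lra. }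
  pose proof (Rabs_pos a). pose proof (Rabs_pos (b - a)).
  assert (E1 : Rabs b * r <= (Rabs a + 1) * r) by (apply Rmult_le_compat_r; lra).
  assert (E2 : (Rabs a + 1) * r < eps / 2).
  { replace (eps / 2) with ((Rabs a + 1) * (eps / (2 * (Rabs a + 1)))) by (field; lra).
    apply Rmult_lt_compat_l; lra. }
  assert (E3 : Rabs (b - a) * M <= eps / (2 * (M + 1)) * M) by (apply Rmult_le_compat_r; lra).
  assert (E4 : eps / (2 * (M + 1)) * M < eps / 2).
  { replace (eps / (2 * (M + 1)) * M) with (eps / 2 * (M / (M + 1))) by (field; lra).
    assert (M / (M + 1) < 1) by (apply (Rmult_lt_reg_r (M + 1)); [lra|]; field_simplify; lra).
    replace (eps / 2) with (eps / 2 * 1) at 2 by ring. apply Rmult_lt_compat_l; lra. }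
  lra.
Qed.

Lemma Rabs_convex_comb (t x y : R) :
  0 <= t <= 1 -> Rabs (t * x + (1 - t) * y) <= t * Rabs x + (1 - t) * Rabs y.
Proof.
  intros Ht. pose proof (Rabs_triang (t * x) ((1 - t) * y)).
  rewrite !Rabs_mult, (Rabs_pos_eq t), (Rabs_pos_eq (1 - t)) in H by lra. exact H.
Qed.

Lemma R_locally_convex : locally_convex R_vspace R_topology.
Proof.
  split; [split|].
  - intros x y W HW Wxy. destruct (HW _ Wxy) as [e [He HeW]].
    exists (fun u => Rabs (u - x) < e / 2), (fun v => Rabs (v - y) < e / 2).
    repeat split; try apply R_ball_open; try (rewrite Rminus_diag, Rabs_R0; lra).
    intros u v Hu Hv. apply HeW. simpl.
    replace (u + v - (x + y)) with ((u - x) + (v - y)) by ring.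
    pose proof (Rabs_triang (u - x) (v - y)). lra.
  - intros a x W HW Wax. destruct (HW _ Wax) as [e [He HeW]].
    pose proof (Rabs_pos x). pose proof (Rabs_pos a).
    exists (Rmin 1 (e / (2 * (Rabs x + 1)))), (fun u => Rabs (u - x) < e / (2 * (Rabs a + 1))).
    assert (0 < e / (2 * (Rabs x + 1))) by (apply Rdiv_lt_0_compat; lra).
    assert (0 < e / (2 * (Rabs a + 1))) by (apply Rdiv_lt_0_compat; lra).
    repeat split.
    + apply Rmin_glb_lt; lra.
    + apply R_ball_open.
    + rewrite Rminus_diag, Rabs_R0; lra.
    + intros b u Hb Hu. apply HeW. simpl.
      pose proof (Rabs_scal_diff a b u x).
      pose proof (scal_continuity_bound a b (Rabs x) (Rabs (u - x)) e He
                    (Rabs_pos _) (Rabs_pos _) Hb Hu).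
      lra.
  - intros W HW W0. destruct (HW _ W0) as [e [He HeW]].
    exists (fun y => Rabs (y - 0) < e). repeat split.
    + intros x y t Hx Hy Ht. simpl. rewrite Rminus_0_r in *.
      pose proof (Rabs_convex_comb t x y Ht).
      assert (t * Rabs x <= t * e) by (apply Rmult_le_compat_l; lra).
      assert ((1 - t) * Rabs y <= (1 - t) * e) by (apply Rmult_le_compat_l; lra).
      destruct (Req_dec t 0) as [->|Ht0]; [lra|].
      assert (t * Rabs x < t * e) by (apply Rmult_lt_compat_l; lra). lra.
    + exists (fun y => Rabs (y - 0) < e). repeat split; [apply R_ball_open | | auto].
      rewrite Rminus_diag, Rabs_R0; lra.
    + intros y Hy. apply HeW. exact Hy.
Qed.

(** * Vector spaces and vector topologies *)

Section VectorSpace.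
Context {E : Type} (VE : vector_space E).

Lemma vadd_cancel_l x y z : vadd VE x y = vadd VE x z -> y = z.
Proof.
  intro H.
  assert (H2 : vadd VE (vopp VE x) (vadd VE x y) = vadd VE (vopp VE x) (vadd VE x z))
    by (rewrite H; auto).
  rewrite !(vadd_assoc _ VE), (vadd_comm _ VE (vopp VE x) x), (vadd_opp _ VE) in H2.
  rewrite !(vadd_comm _ VE (vzero VE)), !(vadd_0 _ VE) in H2. exact H2.
Qed.

Lemma vscal_0_r a : vscal VE a (vzero VE) = vzero VE.
Proof.
  apply (vadd_cancel_l (vscal VE a (vzero VE))).
  rewrite <- (vscal_distr_v _ VE), !(vadd_0 _ VE). reflexivity.
Qed.

Lemma vscal_0_l x : vscal VE 0 x = vzero VE.
Proof.
  apply (vadd_cancel_l (vscal VE 0 x)).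
  rewrite <- (vscal_distr_s _ VE), (vadd_0 _ VE), Rplus_0_l. reflexivity.
Qed.

Lemma vscal_N1 x : vscal VE (-1) x = vopp VE x.
Proof.
  apply (vadd_cancel_l x). rewrite (vadd_opp _ VE).
  rewrite <- (vscal_1 _ VE x) at 1. rewrite <- (vscal_distr_s _ VE), Rplus_opp_r.
  apply vscal_0_l.
Qed.

Lemma lf_0 f : linear_functional VE f -> f (vzero VE) = 0.
Proof.
  intros [Ha _]. pose proof (Ha (vzero VE) (vzero VE)) as H.
  rewrite (vadd_0 _ VE) in H. lra.
Qed.

Lemma lf_opp f x : linear_functional VE f -> f (vopp VE x) = - f x.
Proof. intros Hf. rewrite <- vscal_N1, (proj2 Hf). ring. Qed.

Lemma lf_sub f x y : linear_functional VE f -> f (vadd VE x (vopp VE y)) = f x - f y.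
Proof. intros Hf. rewrite (proj1 Hf), (lf_opp f y Hf). ring. Qed.

Variable t : topology E.
Hypothesis t_vector : vector_topology VE t.

Lemma affine_open W k x0 : open t W -> open t (fun y => W (vscal VE k (vadd VE y x0))).
Proof.
  destruct t_vector as [Had Hsc]. intros HW. apply open_local. intros y Hy.
  destruct (Hsc k (vadd VE y x0) W HW Hy) as [d [U1 [Hd [HU1 [U1y HU1W]]]]].
  destruct (Had y x0 U1 HU1 U1y) as [U2 [V [HU2 [U2y [HV [Vx0 HUV]]]]]].
  exists U2. repeat split; [exact HU2 | exact U2y |].
  intros z Hz. apply HU1W; [rewrite Rminus_diag, Rabs_R0; lra | auto].
Qed.

Lemma vector_group_topology : group_topology VE t.
Proof.
  split; [exact (proj1 t_vector)|].
  intros V HV. apply (open_ext t (fun x => V (vscal VE (-1) (vadd VE x (vzero VE))))).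
  - intro x. rewrite (vadd_0 _ VE), vscal_N1. tauto.
  - apply affine_open, HV.
Qed.

Lemma lf_continuous_of_bounded f U M :
  linear_functional VE f -> open t U -> U (vzero VE) ->
  (forall u, U u -> Rabs (f u) <= M) -> continuous t R_topology f.
Proof.
  intros Hf HU U0 HM V HV. apply open_local. intros x Vx.
  destruct (HV _ Vx) as [eps [He HeV]].
  assert (HM0 : 0 <= M) by (specialize (HM _ U0); pose proof (Rabs_pos (f (vzero VE))); lra).
  set (k := 2 * (M + 1) / eps).
  assert (Hk : k > 0) by (unfold k; apply Rdiv_lt_0_compat; lra).
  exists (fun y => U (vscal VE k (vadd VE y (vopp VE x)))). repeat split.
  - apply affine_open, HU.
  - rewrite (vadd_opp _ VE), vscal_0_r. exact U0.
  - intros y Hy. apply HeV. specialize (HM _ Hy).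
    rewrite (proj2 Hf), lf_sub, Rabs_mult, (Rabs_pos_eq k) in HM by (auto; lra).
    assert (Rabs (f y - f x) <= M / k).
    { apply (Rmult_le_reg_l k); [lra|]. replace (k * (M / k)) with M by (field; lra). exact HM. }
    assert (M / k < eps).
    { replace (M / k) with (eps * (M / (2 * (M + 1)))) by (unfold k; field; lra).
      assert (M / (2 * (M + 1)) < 1) by (apply (Rmult_lt_reg_r (2 * (M + 1))); [lra|];
        field_simplify; lra).
      nra. }
    lra.
Qed.

End VectorSpace.

(** * The circle group and homomorphisms [R -> S] *)

Definition circ_exp (x : R) : R * R := (cos (2 * PI * x), sin (2 * PI * x)).

Lemma circ_exp_unit x : fst (circ_exp x) ^ 2 + snd (circ_exp x) ^ 2 = 1.
Proof. simpl. pose proof (sin2_cos2 (2 * PI * x)). unfold Rsqr in H. lra. Qed.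

Lemma circ_exp_add x y : circ_exp (x + y) = cmul (circ_exp x) (circ_exp y).
Proof.
  unfold circ_exp, cmul; simpl. rewrite Rmult_plus_distr_l, cos_plus, sin_plus.
  f_equal; ring.
Qed.

Lemma circ_exp_half : circ_exp (/ 2) = (-1, 0).
Proof.
  unfold circ_exp. replace (2 * PI * / 2) with PI by field. rewrite cos_PI, sin_PI. reflexivity.
Qed.

Lemma circ_exp_re_nonneg x : Rabs x <= / 4 -> 0 <= fst (circ_exp x).
Proof.
  simpl. pose proof PI_RGT_0.
  unfold Rabs; destruct (Rcase_abs x); intro Hx; apply cos_ge_0; nra.
Qed.

Lemma circ_exp_re_neg x : / 4 < Rabs x <= / 2 -> fst (circ_exp x) < 0.
Proof.
  intros Hx. simpl. pose proof PI_RGT_0.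
  destruct (Rle_lt_dec 0 x) as [Hs|Hs].
  - rewrite Rabs_pos_eq in Hx by lra. apply cos_lt_0; nra.
  - rewrite Rabs_left in Hx by lra. rewrite <- cos_neg. apply cos_lt_0; nra.
Qed.

Lemma Rabs_sin_le u : Rabs (sin u) <= Rabs u.
Proof.
  assert (Hpos : forall v, 0 <= v -> Rabs (sin v) <= v).
  { intros v Hv. destruct (Req_dec v 0) as [->|Hv0]; [rewrite sin_0, Rabs_R0; lra|].
    pose proof (sin_lt_x v ltac:(lra)). pose proof (SIN_bound v). pose proof PI2_1.
    destruct (Rle_lt_dec 1 v); [apply Rabs_le; lra|].
    assert (0 <= sin v) by (apply sin_ge_0; lra). rewrite Rabs_pos_eq; lra. }
  destruct (Rle_lt_dec 0 u).
  - rewrite (Rabs_pos_eq u) by lra. auto.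
  - rewrite (Rabs_left u), <- (Rabs_Ropp (sin u)), <- sin_neg by lra. apply Hpos. lra.
Qed.

Lemma cdist_circ_exp x y : cdist (circ_exp y) (circ_exp x) <= 2 * PI * Rabs (y - x).
Proof.
  unfold cdist, circ_exp; cbn [fst snd].
  set (a := 2 * PI * y). set (b := 2 * PI * x).
  assert (E : (cos a - cos b) ^ 2 + (sin a - sin b) ^ 2 = (2 * sin ((a - b) / 2)) ^ 2).
  { pose proof (sin2_cos2 a). pose proof (sin2_cos2 b). pose proof (cos_minus a b).
    pose proof (cos_2a_sin ((a - b) / 2)).
    replace (2 * ((a - b) / 2)) with (a - b) in H2 by field. unfold Rsqr in *. nra. }
  rewrite E.
  assert (H0 : 0 <= 2 * PI * Rabs (y - x)) by (pose proof PI_RGT_0; pose proof (Rabs_pos (y - x)); nra).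
  rewrite <- (sqrt_Rsqr (2 * PI * Rabs (y - x))) by exact H0.
  apply sqrt_le_1_alt. unfold Rsqr.
  pose proof (Rabs_sin_le ((a - b) / 2)).
  assert (Hab : Rabs ((a - b) / 2) = PI * Rabs (y - x)).
  { unfold a, b. replace ((2 * PI * y - 2 * PI * x) / 2) with (PI * (y - x)) by field.
    rewrite Rabs_mult, Rabs_pos_eq; [reflexivity | pose proof PI_RGT_0; lra]. }
  rewrite Hab in H. pose proof (Rabs_pos (sin ((a - b) / 2))).
  replace ((2 * sin ((a - b) / 2)) ^ 2)
    with (4 * (Rabs (sin ((a - b) / 2)) * Rabs (sin ((a - b) / 2)))); [nra|].
  rewrite <- Rabs_mult, Rabs_pos_eq by nra. ring.
Qed.

Lemma circ_exp_continuous x eps : eps > 0 ->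
  exists d, d > 0 /\ forall y, Rabs (y - x) < d -> cdist (circ_exp y) (circ_exp x) < eps.
Proof.
  intros He. pose proof PI_RGT_0. exists (eps / (2 * PI + 1)). split.
  - apply Rdiv_lt_0_compat; lra.
  - intros y Hy. pose proof (cdist_circ_exp x y). pose proof (Rabs_pos (y - x)).
    apply (Rmult_lt_compat_l (2 * PI + 1)) in Hy; [|lra].
    replace ((2 * PI + 1) * (eps / (2 * PI + 1))) with eps in Hy by (field; lra). nra.
Qed.

Lemma circ_exp_inj a b : circ_exp a = circ_exp b -> Rabs (a - b) < 1 -> a = b.
Proof.
  intros H Hab. unfold circ_exp in H. injection H as H1 H2.
  assert (Hc : cos (2 * (PI * (a - b))) = 1).
  { replace (2 * (PI * (a - b))) with (2 * PI * a - 2 * PI * b) by ring.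
    rewrite cos_minus, H1, H2. pose proof (sin2_cos2 (2 * PI * b)). unfold Rsqr in H. lra. }
  rewrite cos_2a_sin in Hc.
  assert (Hs : sin (PI * (a - b)) = 0) by nra.
  destruct (sin_eq_0_0 _ Hs) as [k Hk].
  assert (Hk2 : a - b = IZR k).
  { apply (Rmult_eq_reg_l PI); [| pose proof PI_RGT_0; lra]. rewrite Hk; ring. }
  rewrite Hk2 in Hab. apply Rabs_def2 in Hab.
  assert (k = 0%Z).
  { assert (-1 < k)%Z by (apply lt_IZR; simpl; lra).
    assert (k < 1)%Z by (apply lt_IZR; simpl; lra). lia. }
  subst k. simpl in Hk2. lra.
Qed.

Lemma circ_exp_scale_inj c c' : (forall s, circ_exp (c * s) = circ_exp (c' * s)) -> c = c'.
Proof.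
  intros H. destruct (Req_dec c c') as [|Hn]; [auto|exfalso].
  set (s := / (2 * (c - c'))).
  pose proof (circ_exp_inj _ _ (H s)) as Hinj.
  replace (c * s - c' * s) with (/ 2) in Hinj by (unfold s; field; lra).
  assert (c * s = c' * s) by (apply Hinj; rewrite Rabs_pos_eq; lra).
  unfold s in H0. apply Rmult_eq_reg_r in H0; [lra|].
  apply Rinv_neq_0_compat. lra.
Qed.

Lemma unit_idempotent z : fst z ^ 2 + snd z ^ 2 = 1 -> cmul z z = z -> z = (1, 0).
Proof.
  destruct z as [x y]; unfold cmul; simpl. intros Hu Hc. injection Hc as H1 H2.
  assert (y = 0) by nra. subst. assert (x = 1) by nra. subst. reflexivity.
Qed.

Lemma cdist_one_re_pos z : cdist z (1, 0) < 1 -> fst z > 0.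
Proof.
  destruct z as [x y]. unfold cdist; cbn [fst snd]. intros H.
  destruct (Rlt_le_dec 0 x) as [|Hx]; [auto|exfalso].
  assert (1 <= (x - 1) ^ 2 + (y - 0) ^ 2) by nra.
  apply sqrt_le_1_alt in H0. rewrite sqrt_1 in H0. lra.
Qed.

Lemma floor_nat x : 0 <= x -> exists k : nat, INR k <= x < INR k + 1.
Proof.
  intros Hx. destruct (archimed x) as [H1 H2].
  assert (Hz : (0 < up x)%Z) by (apply lt_IZR; simpl; lra).
  exists (Z.to_nat (up x - 1)).
  rewrite INR_IZR_INZ, Z2Nat.id by lia. rewrite minus_IZR. simpl. lra.
Qed.

Lemma grid_decomposition d m t : d > 0 -> (1 <= m)%nat -> 0 <= t <= d ->
  exists (k : nat) r, (k <= m)%nat /\ 0 <= r < d / INR m /\ t = INR k * (d / INR m) + r.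
Proof.
  intros Hd Hm Ht. assert (Hm' : 1 <= INR m) by (apply (le_INR 1); exact Hm).
  assert (Hq : d / INR m > 0) by (apply Rdiv_lt_0_compat; lra).
  destruct (floor_nat (t / (d / INR m))) as [k [Hk1 Hk2]];
    [apply Rmult_le_pos; [lra | left; apply Rinv_0_lt_compat; lra]|].
  apply (Rmult_le_compat_r (d / INR m)) in Hk1; [|lra].
  apply (Rmult_lt_compat_r (d / INR m)) in Hk2; [|lra].
  replace (t / (d / INR m) * (d / INR m)) with t in Hk1, Hk2 by (field; lra).
  exists k, (t - INR k * (d / INR m)). repeat split; try lra.
  apply INR_le. apply (Rmult_le_reg_r (d / INR m)); [lra|].
  replace (INR m * (d / INR m)) with d by (field; lra). lra.
Qed.

Section CircleHom.
Variable g : R -> R * R.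
Hypothesis g_unit : forall s, fst (g s) ^ 2 + snd (g s) ^ 2 = 1.
Hypothesis g_hom : forall s t, g (s + t) = cmul (g s) (g t).
Variable d : R.
Hypothesis d_pos : d > 0.
Hypothesis g_re_pos : forall s, Rabs s <= d -> fst (g s) > 0.

(* On [[-d, d]] the values of [g] lie in the open right half-plane, where
   [atan (y / x) / (2 pi)] is a continuous choice of argument. *)
Definition local_arg s := atan (snd (g s) / fst (g s)) / (2 * PI).

Lemma local_arg_spec s : Rabs s <= d -> g s = circ_exp (local_arg s) /\ Rabs (local_arg s) < / 4.
Proof.
  intros Hs. pose proof (g_re_pos s Hs) as Hx. pose proof (g_unit s) as Hu.
  unfold local_arg. destruct (g s) as [x y]. simpl in Hx, Hu |- *.
  pose proof PI_RGT_0. split.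
  - unfold circ_exp. replace (2 * PI * (atan (y / x) / (2 * PI))) with (atan (y / x)) by (field; lra).
    rewrite cos_atan, sin_atan.
    assert (E : sqrt (1 + (y / x)²) = / x).
    { rewrite <- (sqrt_Rsqr (/ x)) by (left; apply Rinv_0_lt_compat; lra).
      f_equal. unfold Rsqr. field_simplify_eq; [nra | lra]. }
    rewrite E. f_equal; field; lra.
  - pose proof (atan_bound (y / x)).
    apply Rabs_def1; apply (Rmult_lt_reg_r (2 * PI)); try lra;
      unfold Rdiv; rewrite Rmult_assoc, Rinv_l, Rmult_1_r by lra; lra.
Qed.

Lemma local_arg_add s t : Rabs s <= d -> Rabs t <= d -> Rabs (s + t) <= d ->
  local_arg (s + t) = local_arg s + local_arg t.
Proof.
  intros Hs Ht Hst. destruct (local_arg_spec s Hs) as [Es Bs].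
  destruct (local_arg_spec t Ht) as [Et Bt]. destruct (local_arg_spec (s + t) Hst) as [Est Bst].
  apply circ_exp_inj.
  - rewrite <- Est, circ_exp_add, <- Es, <- Et. apply g_hom.
  - apply Rabs_def2 in Bs, Bt, Bst. apply Rabs_def1; lra.
Qed.

Definition slope := local_arg d / d.
Definition defect s := local_arg s - slope * s.

Lemma defect_add s t : Rabs s <= d -> Rabs t <= d -> Rabs (s + t) <= d ->
  defect (s + t) = defect s + defect t.
Proof. intros. unfold defect. rewrite local_arg_add by auto. ring. Qed.

Lemma defect_0 : defect 0 = 0.
Proof.
  assert (H : Rabs 0 <= d) by (rewrite Rabs_R0; lra).
  pose proof (defect_add 0 0 H H) as E. rewrite Rplus_0_l in E. specialize (E H). lra.
Qed.

Lemma defect_d : defect d = 0.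
Proof. unfold defect, slope. field. lra. Qed.

Lemma defect_bound s : Rabs s <= d -> Rabs (defect s) <= / 2.
Proof.
  intros Hs. destruct (local_arg_spec s Hs) as [_ B1].
  destruct (local_arg_spec d ltac:(rewrite Rabs_pos_eq; lra)) as [_ B2].
  assert (Rabs (slope * s) <= Rabs (local_arg d)).
  { unfold slope, Rdiv. rewrite !Rabs_mult, Rabs_inv, (Rabs_pos_eq d) by lra.
    replace (Rabs (local_arg d)) with (Rabs (local_arg d) * / d * d) at 2 by (field; lra).
    apply Rmult_le_compat_l; [|exact Hs].
    apply Rmult_le_pos; [apply Rabs_pos | left; apply Rinv_0_lt_compat; lra]. }
  unfold defect. pose proof (Rabs_triang (local_arg s) (- (slope * s))).
  rewrite Rabs_Ropp in H0. unfold Rminus. lra.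
Qed.

Lemma defect_nat_mul n s : 0 <= s -> INR n * s <= d -> defect (INR n * s) = INR n * defect s.
Proof.
  intros Hs. induction n as [|n IH]; intros Hn.
  - simpl. rewrite !Rmult_0_l. apply defect_0.
  - rewrite S_INR in *. pose proof (pos_INR n).
    replace ((INR n + 1) * s) with (INR n * s + s) by ring.
    rewrite defect_add, IH by (rewrite ?Rabs_pos_eq; nra). ring.
Qed.

Lemma defect_grid m k : (1 <= m)%nat -> (k <= m)%nat -> defect (INR k * (d / INR m)) = 0.
Proof.
  intros Hm Hk. assert (Hm' : 1 <= INR m) by (apply (le_INR 1); exact Hm).
  assert (Hk' : INR k <= INR m) by (apply le_INR; exact Hk).
  assert (Hq : 0 < d / INR m) by (apply Rdiv_lt_0_compat; lra).
  assert (Hmq : INR m * (d / INR m) = d) by (field; lra).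
  assert (H1 : defect (d / INR m) = 0).
  { pose proof (defect_nat_mul m (d / INR m)) as H. rewrite Hmq, defect_d in H.
    specialize (H ltac:(lra) ltac:(lra)). apply (Rmult_eq_reg_l (INR m)); lra. }
  rewrite defect_nat_mul, H1 by nra. ring.
Qed.

Lemma defect_small m t : (1 <= m)%nat -> 0 <= t <= d -> Rabs (defect t) <= / 2 / INR m.
Proof.
  intros Hm Ht. assert (Hm' : 1 <= INR m) by (apply (le_INR 1); exact Hm).
  destruct (grid_decomposition d m t d_pos Hm Ht) as [k [r [Hk [Hr ->]]]].
  assert (Hqd : d / INR m <= d).
  { apply (Rmult_le_reg_l (INR m)); [lra|].
    replace (INR m * (d / INR m)) with d by (field; lra). nra. }
  assert (Hmr : INR m * r <= d).
  { replace d with (INR m * (d / INR m)) by (field; lra). apply Rmult_le_compat_l; lra. }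
  assert (Hq : INR k * (d / INR m) >= 0) by (apply Rle_ge, Rmult_le_pos; [apply pos_INR | lra]).
  rewrite defect_add, defect_grid, Rplus_0_l by (auto || rewrite Rabs_pos_eq; lra).
  pose proof (defect_bound (INR m * r) ltac:(rewrite Rabs_pos_eq; nra)) as Hb.
  rewrite defect_nat_mul, Rabs_mult, (Rabs_pos_eq (INR m)) in Hb by lra.
  apply (Rmult_le_reg_l (INR m)); [lra|].
  replace (INR m * (/ 2 / INR m)) with (/ 2) by (field; lra). exact Hb.
Qed.

Lemma defect_zero_pos t : 0 <= t <= d -> defect t = 0.
Proof.
  intros Ht. apply NNPP. intro Hn. pose proof (Rabs_pos_lt _ Hn) as Ha.
  destruct (archimed_cor1 (2 * Rabs (defect t)) ltac:(lra)) as [m [Hm Hm0]].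
  pose proof (defect_small m t Hm0 Ht) as Hs.
  assert (Hm' : 0 < INR m) by (apply lt_0_INR; exact Hm0).
  replace (/ 2 / INR m) with (/ INR m / 2) in Hs by (field; lra). lra.
Qed.

Lemma defect_zero t : Rabs t <= d -> defect t = 0.
Proof.
  intros Ht. destruct (Rle_lt_dec 0 t).
  - apply defect_zero_pos. rewrite Rabs_pos_eq in Ht; lra.
  - rewrite Rabs_left in Ht by lra.
    pose proof (defect_zero_pos (- t) ltac:(lra)).
    assert (E : defect (t + - t) = defect t + defect (- t)).
    { apply defect_add; [rewrite Rabs_left | rewrite Rabs_pos_eq | rewrite Rplus_opp_r, Rabs_R0];
        lra. }
    rewrite Rplus_opp_r, defect_0 in E. lra.
Qed.

Lemma circle_hom_near s : Rabs s <= d -> g s = circ_exp (slope * s).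
Proof.
  intros Hs. destruct (local_arg_spec s Hs) as [E _]. rewrite E. f_equal.
  pose proof (defect_zero s Hs). unfold defect in H. lra.
Qed.

Lemma circle_hom_exp s : g s = circ_exp (slope * s).
Proof.
  assert (Hn : forall n : nat, forall s, Rabs s <= INR n * d -> g s = circ_exp (slope * s)).
  { induction n as [|n IH]; intros s' Hs.
    - apply circle_hom_near. simpl in Hs. lra.
    - destruct (Rle_lt_dec (Rabs s') d) as [H|H]; [apply circle_hom_near, H|].
      rewrite S_INR in Hs.
      destruct (Rle_lt_dec 0 s') as [H0|H0].
      + rewrite Rabs_pos_eq in H, Hs by lra.
        replace s' with ((s' - d) + d) by ring.
        rewrite g_hom, IH, circle_hom_near, <- circ_exp_add by (rewrite Rabs_pos_eq; lra).
        f_equal; ring.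
      + rewrite Rabs_left in H, Hs by lra.
        replace s' with ((s' + d) + - d) by ring.
        rewrite g_hom, IH, circle_hom_near, <- circ_exp_add
          by first [rewrite Rabs_Ropp, Rabs_pos_eq; lra | rewrite Rabs_left; lra].
        f_equal; ring. }
  destruct (INR_archimed d (Rabs s) d_pos) as [n Hn']. apply (Hn n). lra.
Qed.

End CircleHom.

Lemma circle_hom_linear (g : R -> R * R) :
  (forall s, fst (g s) ^ 2 + snd (g s) ^ 2 = 1) ->
  (forall s t, g (s + t) = cmul (g s) (g t)) ->
  forall d, d > 0 -> (forall s, Rabs s <= d -> fst (g s) > 0) ->
  exists c, forall s, g s = circ_exp (c * s).
Proof. intros Hu Hh d Hd Hp. exists (slope g d). apply circle_hom_exp; auto. Qed.

(** * Characters of a topological vector space *)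

Section Characters.
Context {E : Type} (VE : vector_space E) (t : topology E).

Lemma character_of_functional (phi : E -> R) (a : R) :
  linear_functional VE phi -> continuous t R_topology phi ->
  character VE t (fun v => circ_exp (a * phi v)).
Proof.
  intros Hl Hc. split; [|split].
  - intro; apply circ_exp_unit.
  - intros x y. rewrite (proj1 Hl), Rmult_plus_distr_l. apply circ_exp_add.
  - intros x eps He. destruct (circ_exp_continuous (a * phi x) eps He) as [d [Hd Hde]].
    pose proof (Rabs_pos a).
    exists (fun y => Rabs (phi y - phi x) < d / (Rabs a + 1)). repeat split.
    + apply (Hc (fun r => Rabs (r - phi x) < d / (Rabs a + 1))), R_ball_open.
    + rewrite Rminus_diag, Rabs_R0. apply Rdiv_lt_0_compat; lra.
    + intros y Hy. apply Hde. rewrite <- Rmult_minus_distr_l, Rabs_mult.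
      apply (Rmult_lt_compat_l (Rabs a + 1)) in Hy; [|lra].
      replace ((Rabs a + 1) * (d / (Rabs a + 1))) with d in Hy by (field; lra).
      pose proof (Rabs_pos (phi y - phi x)). nra.
Qed.

Hypothesis t_vector : vector_topology VE t.

Lemma character_zero chi : character VE t chi -> chi (vzero VE) = (1, 0).
Proof.
  intros [Hu [Hh _]]. apply unit_idempotent; [apply Hu|].
  rewrite <- Hh, (vadd_0 _ VE). reflexivity.
Qed.

Lemma character_re_pos_nbhd chi : character VE t chi ->
  exists U, open t U /\ U (vzero VE) /\ forall y, U y -> fst (chi y) > 0.
Proof.
  intros Hchi. destruct (proj2 (proj2 Hchi) (vzero VE) 1 ltac:(lra)) as [U [HU [U0 HUc]]].
  exists U. repeat split; auto. intros y Hy. apply cdist_one_re_pos.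
  rewrite <- (character_zero chi Hchi). apply HUc, Hy.
Qed.

Lemma character_on_line chi : character VE t chi ->
  forall v, exists c, forall s, chi (vscal VE s v) = circ_exp (c * s).
Proof.
  intros Hchi v. destruct (character_re_pos_nbhd chi Hchi) as [U0 [HU0 [U00 Hp]]].
  rewrite <- (vscal_0_l VE v) in U00.
  destruct (proj2 t_vector 0 v U0 HU0 U00) as [d [U [Hd [HU [Uv HUW]]]]].
  destruct Hchi as [Hu [Hh _]].
  apply (circle_hom_linear (fun s => chi (vscal VE s v))) with (d := d / 2).
  - intro; apply Hu.
  - intros s s'. rewrite (vscal_distr_s _ VE). apply Hh.
  - lra.
  - intros s Hs. apply Hp, HUW, Uv. rewrite Rminus_0_r. lra.
Qed.

(* If [|phi u| > 1 / d] then [b = 1 / (2 phi u)] is a scalar with [|b| < d] and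
   [chi (b u) = circ_exp (1 / 2) = -1]. *)
Lemma lifted_functional_continuous chi phi :
  character VE t chi -> linear_functional VE phi ->
  (forall v, chi v = circ_exp (phi v)) -> continuous t R_topology phi.
Proof.
  intros Hchi Hl Hphi. destruct (character_re_pos_nbhd chi Hchi) as [U0 [HU0 [U00 Hp]]].
  rewrite <- (vscal_0_l VE (vzero VE)) in U00.
  destruct (proj2 t_vector 0 (vzero VE) U0 HU0 U00) as [d [U [Hd [HU [U0' HUW]]]]].
  apply (lf_continuous_of_bounded VE t t_vector phi U (/ d)); auto.
  intros u Hu. destruct (Rle_lt_dec (Rabs (phi u)) (/ d)) as [|Hgt]; [auto|exfalso].
  pose proof (Rinv_0_lt_compat d Hd).
  assert (Hpu : phi u <> 0) by (intro Hz; rewrite Hz, Rabs_R0 in Hgt; lra).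
  pose proof (Rabs_pos_lt _ Hpu).
  set (b := / (2 * phi u)).
  assert (Hb : Rabs (b - 0) < d).
  { unfold b. rewrite Rminus_0_r, Rabs_inv, Rabs_mult, (Rabs_pos_eq 2) by lra.
    apply (Rmult_lt_reg_l (2 * Rabs (phi u))); [lra|]. rewrite Rinv_r by lra.
    apply (Rmult_lt_compat_r d) in Hgt; [|lra]. rewrite Rinv_l in Hgt by lra. nra. }
  pose proof (Hp _ (HUW b u Hb Hu)) as Hre.
  rewrite Hphi, (proj2 Hl) in Hre.
  replace (b * phi u) with (/ 2) in Hre by (unfold b; field; auto).
  rewrite circ_exp_half in Hre. simpl in Hre. lra.
Qed.

Lemma character_lift chi : character VE t chi ->
  exists phi, linear_functional VE phi /\ continuous t R_topology phi /\
              forall v, chi v = circ_exp (phi v).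
Proof.
  intros Hchi. pose proof Hchi as [_ [Hh _]].
  set (phi := fun v => proj1_sig (constructive_indefinite_description _
                          (character_on_line chi Hchi v))).
  assert (Hphi : forall v s, chi (vscal VE s v) = circ_exp (phi v * s)).
  { intros v s. unfold phi.
    destruct (constructive_indefinite_description _ _) as [c Hcv]. apply Hcv. }
  assert (Hval : forall v, chi v = circ_exp (phi v)).
  { intro v. rewrite <- (vscal_1 _ VE v) at 1. rewrite Hphi, Rmult_1_r. reflexivity. }
  assert (Hlin : linear_functional VE phi).
  { split.
    - intros x y. apply circ_exp_scale_inj. intro s.
      rewrite <- Hphi, (vscal_distr_v _ VE), Hh, !Hphi, <- circ_exp_add. f_equal; ring.
    - intros a x. apply circ_exp_scale_inj. intro s.
      rewrite <- Hphi, (vscal_assoc _ VE), Hphi. f_equal; ring. }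
  exists phi. split; [exact Hlin | split; [|exact Hval]].
  apply (lifted_functional_continuous chi); auto.
Qed.

(* [a = 1 / (2 (eps + |psi g|))] makes [a psi] at most [1 / 4] in absolute value on the
   ball but puts [a psi g] in [(1 / 4, 1 / 2)]. *)
Lemma polar_ball_quasi_convex (K : (E -> R) -> Prop) (eps : R) :
  eps > 0 -> (forall psi, K psi -> linear_functional VE psi /\ continuous t R_topology psi) ->
  quasi_convex VE t (fun y => forall psi, K psi -> Rabs (psi y) <= eps).
Proof.
  intros He HK g Hg.
  apply not_all_ex_not in Hg. destruct Hg as [psi Hpsi].
  apply imply_to_and in Hpsi. destruct Hpsi as [Kpsi Hgt]. apply Rnot_le_lt in Hgt.
  set (a := / (2 * (eps + Rabs (psi g)))).
  assert (Ha : a > 0) by (unfold a; apply Rinv_0_lt_compat; lra).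
  destruct (HK psi Kpsi) as [Hl Hc].
  exists (fun v => circ_exp (a * psi v)). split; [apply character_of_functional; auto | split].
  - intros y Hy. apply circ_exp_re_nonneg. specialize (Hy psi Kpsi).
    rewrite Rabs_mult, (Rabs_pos_eq a) by lra.
    apply (Rle_trans _ (a * eps)); [apply Rmult_le_compat_l; lra|].
    unfold a. apply (Rmult_le_reg_l (4 * (eps + Rabs (psi g)))); [lra|].
    field_simplify; lra.
  - apply Rlt_not_le, circ_exp_re_neg.
    rewrite Rabs_mult, (Rabs_pos_eq a) by lra. unfold a. split.
    + apply (Rmult_lt_reg_l (4 * (eps + Rabs (psi g)))); [lra|]. field_simplify; lra.
    + apply (Rmult_le_reg_l (2 * (eps + Rabs (psi g)))); [lra|]. field_simplify; lra.
Qed.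

End Characters.

Lemma group_compatible_of_lc_compatible {E} (VE : vector_space E) (t1 t2 : topology E) :
  vector_topology VE t1 -> vector_topology VE t2 -> lc_compatible VE t1 t2 ->
  group_compatible VE t1 t2.
Proof.
  intros Hv1 Hv2 Hcomp.
  assert (Htransfer : forall ta tb, vector_topology VE ta ->
            (forall f, linear_functional VE f -> continuous ta R_topology f ->
                       continuous tb R_topology f) ->
            forall chi, character VE ta chi -> character VE tb chi).
  { intros ta tb Hva Hab chi Hchi.
    destruct (character_lift VE ta Hva chi Hchi) as [phi [Hl [Hc Hval]]].
    replace chi with (fun v => circ_exp (1 * phi v))
      by (apply functional_extensionality; intro v; rewrite Hval, Rmult_1_l; reflexivity).
    apply character_of_functional; auto. }
  intro chi. split; apply Htransfer; auto; intros f Hf; apply (Hcomp f Hf).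
Qed.

(** * The convergent sequence [s] *)

Lemma s_pt_eq (x y : s_pt) : proj1_sig x = proj1_sig y -> x = y.
Proof.
  destruct x as [x hx], y as [y hy]; simpl; intros ->. f_equal. apply proof_irrelevance.
Qed.

Definition s_seq (n : nat) : s_pt :=
  exist in_s (/ INR (S n)) (or_intror (ex_intro _ (S n) (conj (le_n_S 0 n (Nat.le_0_l n)) eq_refl))).
Definition s_zero : s_pt := exist in_s 0 (or_introl eq_refl).

Lemma s_seq_pos n : 0 < / INR (S n).
Proof. apply Rinv_0_lt_compat, lt_0_INR. lia. Qed.

Lemma s_seq_small d : d > 0 -> exists N : nat, forall n, (N <= n)%nat -> / INR (S n) < d.
Proof.
  intros Hd. destruct (archimed_cor1 d Hd) as [N [HN HN0]]. exists N. intros n Hn.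
  apply (Rle_lt_trans _ (/ INR N)); [|exact HN].
  apply Rinv_le_contravar; [apply lt_0_INR; exact HN0 | apply le_INR; lia].
Qed.

Lemma s_open_iff (U : s_pt -> Prop) : open s_topology U <->
  (forall x, U x -> exists d, d > 0 /\
     forall y : s_pt, Rabs (proj1_sig y - proj1_sig x) < d -> U y).
Proof.
  split.
  - intros [V [HV EV]] x Ux. apply EV in Ux. destruct (HV _ Ux) as [e [He H]].
    exists e. split; auto. intros y Hy. apply EV, H, Hy.
  - intros H. exists (fun r => exists x, U x /\ exists d, d > 0 /\
        (forall y : s_pt, Rabs (proj1_sig y - proj1_sig x) < d -> U y) /\
        Rabs (r - proj1_sig x) < d).
    split.
    + intros r [x [Ux [d [Hd [Hy Hr]]]]]. exists (d - Rabs (r - proj1_sig x)). split; [lra|].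
      intros z Hz. exists x. repeat split; auto. exists d. repeat split; auto.
      pose proof (Rabs_triang (z - r) (r - proj1_sig x)).
      replace (z - r + (r - proj1_sig x)) with (z - proj1_sig x) in H0 by ring. lra.
    + intro y. split.
      * intro Uy. destruct (H y Uy) as [d [Hd Hdy]]. exists y. split; auto.
        exists d. repeat split; auto. rewrite Rminus_diag, Rabs_R0; lra.
      * intros [x [Ux [d [Hd [Hy Hr]]]]]. apply Hy, Hr.
Qed.

(* The gap between [1 / k] and its neighbours [1 / (k + 1)] and [1 / (k - 1)] is at
   least [1 / (k (k + 1))]. *)
Lemma s_isolated (k : nat) (y : s_pt) : (1 <= k)%nat ->
  Rabs (proj1_sig y - / INR k) < / (INR k * (INR k + 1)) -> proj1_sig y = / INR k.
Proof.
  intros Hk H. assert (Hp : 1 <= INR k) by (apply (le_INR 1); exact Hk).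
  destruct (proj2_sig y) as [H0 | [k' [Hk' Hy]]].
  - exfalso. rewrite H0, Rminus_0_l, Rabs_Ropp, Rabs_pos_eq in H
      by (left; apply Rinv_0_lt_compat; lra).
    assert (Hle : / INR k <= / (INR k * (INR k + 1))) by lra.
    apply Rinv_le_contravar in Hle; [|apply Rinv_0_lt_compat; nra].
    rewrite !Rinv_inv in Hle. nra.
  - rewrite Hy in *. destruct (Nat.eq_dec k' k) as [->|Hne]; [reflexivity|exfalso].
    assert (Hq : 1 <= INR k') by (apply (le_INR 1); exact Hk').
    set (a := INR k') in *. set (p := INR k) in *.
    replace (/ a - / p) with ((p - a) / (a * p)) in H by (field; lra).
    unfold Rdiv in H. rewrite Rabs_mult, (Rabs_pos_eq (/ (a * p))) in H
      by (left; apply Rinv_0_lt_compat; nra).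
    apply (Rmult_lt_compat_r (a * p)) in H; [|nra].
    replace (Rabs (p - a) * / (a * p) * (a * p)) with (Rabs (p - a)) in H by (field; nra).
    replace (/ (p * (p + 1)) * (a * p)) with (a / (p + 1)) in H by (field; nra).
    apply (Rmult_lt_compat_r (p + 1)) in H; [|lra].
    replace (a / (p + 1) * (p + 1)) with a in H by (field; lra).
    destruct (Nat.lt_ge_cases k' k) as [Hlt|Hge].
    + assert (a + 1 <= p) by (unfold a, p; rewrite <- S_INR; apply le_INR; lia).
      rewrite Rabs_pos_eq in H by lra. nra.
    + assert (p + 1 <= a) by (unfold a, p; rewrite <- S_INR; apply le_INR; lia).
      rewrite Rabs_left in H by lra. nra.
Qed.

Definition seq_converges (u : nat -> R) (l : R) : Prop :=
  forall eps, eps > 0 -> exists N, forall n, (N <= n)%nat -> Rabs (u n - l) < eps.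

Lemma s_continuous_of_seq (g : s_pt -> R) :
  seq_converges (fun n => g (s_seq n)) (g s_zero) -> continuous s_topology R_topology g.
Proof.
  intros Hs V HV. apply s_open_iff. intros x Vx.
  destruct (proj2_sig x) as [H0 | [k [Hk Hx]]].
  - replace x with s_zero in * by (apply s_pt_eq; symmetry; exact H0).
    destruct (HV _ Vx) as [e [He HeV]]. destruct (Hs e He) as [N HN].
    exists (/ INR (S N)). split; [apply s_seq_pos|].
    intros y Hy. cbn [proj1_sig s_zero] in Hy. rewrite Rminus_0_r in Hy.
    destruct (proj2_sig y) as [Hy0 | [k' [Hk' Hy']]].
    + replace y with s_zero by (apply s_pt_eq; symmetry; exact Hy0). exact Vx.
    + replace y with (s_seq (pred k'))
        by (apply s_pt_eq; cbn [proj1_sig s_seq]; rewrite Hy'; do 2 f_equal; lia).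
      apply HeV, HN. rewrite Hy', Rabs_pos_eq in Hy by (left; apply Rinv_0_lt_compat, lt_0_INR; lia).
      destruct (Nat.le_gt_cases N (pred k')) as [|Hlt]; [auto|exfalso].
      assert (INR k' <= INR (S N)) by (apply le_INR; lia).
      apply Rinv_le_contravar in H; [lra | apply lt_0_INR; lia].
  - exists (/ (INR k * (INR k + 1))). split.
    + assert (1 <= INR k) by (apply (le_INR 1); exact Hk). apply Rinv_0_lt_compat. nra.
    + intros y Hy. rewrite Hx in Hy.
      replace y with x by (apply s_pt_eq; rewrite Hx; symmetry; apply (s_isolated k y Hk Hy)).
      exact Vx.
Qed.

Lemma s_seq_of_continuous (g : s_pt -> R) : continuous s_topology R_topology g ->
  seq_converges (fun n => g (s_seq n)) (g s_zero).
Proof.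
  intros Hg eps He. pose proof (Hg _ (R_ball_open (g s_zero) eps)) as HO.
  destruct (proj1 (s_open_iff _) HO s_zero) as [d [Hd Hdy]];
    [cbv beta; rewrite Rminus_diag, Rabs_R0; lra|].
  destruct (s_seq_small d Hd) as [N HN]. exists N.
  intros n Hn. apply Hdy. cbn [proj1_sig s_seq s_zero].
  rewrite Rminus_0_r, Rabs_pos_eq; [apply HN, Hn | left; apply s_seq_pos].
Qed.

Definition s_indicator (n : nat) (x : s_pt) : R :=
  if Req_EM_T (proj1_sig x) (/ INR (S n)) then 1 else 0.

Lemma s_indicator_seq n m : s_indicator n (s_seq m) = if Nat.eq_dec m n then 1 else 0.
Proof.
  unfold s_indicator. cbn [proj1_sig s_seq].
  destruct (Req_EM_T _ _) as [E|E]; destruct (Nat.eq_dec m n) as [->|Hn]; auto.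
  - exfalso. apply Hn. apply Rinv_eq_reg, INR_eq in E. lia.
  - exfalso. auto.
Qed.

Lemma s_indicator_zero n : s_indicator n s_zero = 0.
Proof.
  unfold s_indicator. cbn [proj1_sig s_zero]. destruct (Req_EM_T _ _) as [E|E]; auto.
  exfalso. pose proof (s_seq_pos n). lra.
Qed.

Lemma s_indicator_continuous n : continuous s_topology R_topology (s_indicator n).
Proof.
  apply s_continuous_of_seq. intros eps He. exists (S n). intros m Hm.
  rewrite s_indicator_seq, s_indicator_zero. destruct (Nat.eq_dec m n); [lia|].
  rewrite Rminus_diag, Rabs_R0; lra.
Qed.

(** * Consequences of the universal property *)

Section Subspace.
Context {E : Type} (VE : vector_space E) (S : E -> Prop)
  (S0 : S (vzero VE)) (Sadd : forall x y, S x -> S y -> S (vadd VE x y))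
  (Sopp : forall x, S x -> S (vopp VE x)) (Sscal : forall a x, S x -> S (vscal VE a x)).

Lemma sub_eq (x y : {v | S v}) : proj1_sig x = proj1_sig y -> x = y.
Proof.
  destruct x as [x hx], y as [y hy]; simpl; intros ->. f_equal. apply proof_irrelevance.
Qed.

Definition sub_vspace : vector_space {v | S v}.
Proof.
  refine {| vzero := exist _ _ S0;
            vadd := fun x y => exist _ _ (Sadd _ _ (proj2_sig x) (proj2_sig y));
            vopp := fun x => exist _ _ (Sopp _ (proj2_sig x));
            vscal := fun a x => exist _ _ (Sscal a _ (proj2_sig x)) |};
  intros; apply sub_eq; simpl.
  - apply vadd_assoc.
  - apply vadd_comm.
  - apply vadd_0.
  - apply vadd_opp.
  - apply vscal_1.
  - apply vscal_assoc.
  - apply vscal_distr_v.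
  - apply vscal_distr_s.
Defined.

End Subspace.

Section FreeLCS.
Context {L : Type} (VL : vector_space L) (tau : topology L) (i : s_pt -> L)
  (Hfree : free_lcs s_topology VL tau i).

Lemma tau_vector : vector_topology VL tau.
Proof. exact (proj1 (proj1 Hfree)). Qed.

Lemma i_continuous : continuous s_topology tau i.
Proof. exact (proj1 (proj2 Hfree)). Qed.

(* Uniqueness in the universal property, applied with the indiscrete topology on the
   target, for which every map is continuous. *)
Lemma free_linear_eq {F} (VF : vector_space F) (h1 h2 : L -> F) :
  Defs.linear VL VF h1 -> Defs.linear VL VF h2 -> (forall x, h1 (i x) = h2 (i x)) ->
  forall v, h1 v = h2 v.
Proof.
  intros H1 H2 Hi v.
  destruct (proj2 (proj2 Hfree) F VF (indiscrete F) (indiscrete_locally_convex VF)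
              (fun x => h1 (i x)) (continuous_indiscrete _ _)) as [g [_ Hu]].
  rewrite (Hu h1), (Hu h2); auto using continuous_indiscrete.
Qed.

Lemma free_span (S : L -> Prop) (S0 : S (vzero VL))
  (Sadd : forall x y, S x -> S y -> S (vadd VL x y)) (Sopp : forall x, S x -> S (vopp VL x))
  (Sscal : forall a x, S x -> S (vscal VL a x)) :
  (forall x, S (i x)) -> forall v, S v.
Proof.
  intros Si v.
  set (VS := sub_vspace VL S S0 Sadd Sopp Sscal).
  destruct (proj2 (proj2 Hfree) _ VS (indiscrete _) (indiscrete_locally_convex VS)
              (fun x => exist S (i x) (Si x)) (continuous_indiscrete _ _))
    as [g [[[Hadd Hscal] [_ Hgi]] _]].
  replace v with (proj1_sig (g v)); [exact (proj2_sig (g v))|].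
  apply (free_linear_eq VL (fun w => proj1_sig (g w)) (fun w => w)).
  - split; intros; [rewrite Hadd | rewrite Hscal]; reflexivity.
  - split; reflexivity.
  - intro x. rewrite Hgi. reflexivity.
Qed.

Lemma free_continuous_of_comp f : linear_functional VL f ->
  continuous s_topology R_topology (fun x => f (i x)) -> continuous tau R_topology f.
Proof.
  intros Hl Hc.
  destruct (proj2 (proj2 Hfree) R R_vspace R_topology R_locally_convex _ Hc)
    as [g [[Hgl [Hgc Hgi]] _]].
  intros V HV. apply (open_ext tau (fun x => V (g x))); [|apply Hgc, HV].
  intro x. rewrite (free_linear_eq R_vspace f g Hl Hgl); [tauto | auto].
Qed.

Lemma coeff_exists n : exists c : L -> R,
  linear_functional VL c /\ continuous tau R_topology c /\ forall x, c (i x) = s_indicator n x.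
Proof.
  destruct (proj2 (proj2 Hfree) R R_vspace R_topology R_locally_convex (s_indicator n)
              (s_indicator_continuous n)) as [c [Hc _]].
  exists c. exact Hc.
Qed.

(* [coeff n v] is the coefficient of [i (s_seq n)] in [v]. *)
Definition coeff (n : nat) : L -> R :=
  proj1_sig (constructive_indefinite_description _ (coeff_exists n)).

Lemma coeff_spec n : linear_functional VL (coeff n) /\ continuous tau R_topology (coeff n) /\
  forall x, coeff n (i x) = s_indicator n x.
Proof. unfold coeff. destruct (constructive_indefinite_description _ _) as [c Hc]. exact Hc. Qed.

Lemma coeff_linear n : linear_functional VL (coeff n). Proof. apply coeff_spec. Qed.
Lemma coeff_continuous n : continuous tau R_topology (coeff n). Proof. apply coeff_spec. Qed.
Lemma coeff_i n x : coeff n (i x) = s_indicator n x. Proof. apply coeff_spec. Qed.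

Lemma coeff_bounded v : exists M, forall n, Rabs (coeff n v) <= M.
Proof.
  revert v. apply free_span.
  - exists 0. intro n. rewrite lf_0, Rabs_R0 by apply coeff_linear. lra.
  - intros x y [M1 H1] [M2 H2]. exists (M1 + M2). intro n. rewrite (proj1 (coeff_linear n)).
    pose proof (Rabs_triang (coeff n x) (coeff n y)). specialize (H1 n); specialize (H2 n). lra.
  - intros x [M H]. exists M. intro n. rewrite lf_opp, Rabs_Ropp by apply coeff_linear. apply H.
  - intros a x [M H]. exists (Rabs a * M). intro n. rewrite (proj2 (coeff_linear n)), Rabs_mult.
    apply Rmult_le_compat_l; [apply Rabs_pos | apply H].
  - intro x. exists 1. intro n. rewrite coeff_i. unfold s_indicator.
    destruct (Req_EM_T _ _); rewrite ?Rabs_R1, ?Rabs_R0; lra.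
Qed.

Definition s_diff (n : nat) : L := vadd VL (i (s_seq n)) (vopp VL (i s_zero)).

Lemma coeff_s_diff m n : coeff m (s_diff n) = if Nat.eq_dec n m then 1 else 0.
Proof.
  unfold s_diff. rewrite lf_sub, !coeff_i, s_indicator_seq, s_indicator_zero by apply coeff_linear.
  destruct (Nat.eq_dec n m); ring.
Qed.

Lemma s_diff_converges f : linear_functional VL f -> continuous tau R_topology f ->
  seq_converges (fun n => f (s_diff n)) 0.
Proof.
  intros Hl Hc eps He.
  destruct (s_seq_of_continuous (fun x => f (i x))
              (continuous_comp _ _ _ _ _ i_continuous Hc) eps He) as [N HN].
  exists N. intros n Hn. unfold s_diff. rewrite lf_sub, Rminus_0_r by exact Hl. auto.
Qed.

End FreeLCS.

(** * A strictly finer compatible topology *)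

Lemma list_functionals_bounded {E} (Phi : list (E -> R)) x :
  exists M, 0 <= M /\ forall phi, In phi Phi -> Rabs (phi x) <= M.
Proof.
  induction Phi as [|f Phi [M [HM H]]].
  - exists 0. split; [lra | intros phi []].
  - pose proof (Rabs_pos (f x)). exists (M + Rabs (f x)). split; [lra|].
    intros phi [<-|Hin]; [lra | specialize (H phi Hin); lra].
Qed.

Section Nu.
Context {L : Type} (VL : vector_space L) (tau : topology L) (i : s_pt -> L)
  (Hfree : free_lcs s_topology VL tau i).

Local Notation coeff := (coeff VL tau i Hfree).
Local Notation coeff_linear := (coeff_linear VL tau i Hfree).
Local Notation s_diff := (s_diff VL i).

Definition tau_functional (phi : L -> R) :=
  linear_functional VL phi /\ continuous tau R_topology phi.

Definition nu_family (Phi : list (L -> R)) (psi : L -> R) :=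
  In psi Phi \/ exists n, psi = coeff n.

(* The ball of radius [eps] around [x] for the seminorm
   [max (|phi_1|, ..., |phi_k|, sup_n |coeff n|)], the supremum being expressed by a
   common bound [r < eps]; it is finite by [coeff_bounded]. *)
Definition nu_ball (Phi : list (L -> R)) (x : L) (eps : R) (y : L) :=
  exists r, r < eps /\ forall psi, nu_family Phi psi -> Rabs (psi y - psi x) <= r.

Definition nu_open (U : L -> Prop) :=
  forall x, U x -> exists Phi, (forall phi, In phi Phi -> tau_functional phi) /\
    exists eps, eps > 0 /\ forall y, nu_ball Phi x eps y -> U y.

Definition nu : topology L.
Proof.
  refine {| open := nu_open |}.
  - intros x _. exists nil. split; [intros phi []|]. exists 1. split; [lra | auto].
  - intros U V HU HV x [Ux Vx].
    destruct (HU x Ux) as [P1 [G1 [e1 [He1 H1]]]]. destruct (HV x Vx) as [P2 [G2 [e2 [He2 H2]]]].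
    exists (P1 ++ P2). split.
    + intros phi Hin. apply in_app_or in Hin. destruct Hin; auto.
    + exists (Rmin e1 e2). split; [apply Rmin_glb_lt; lra|].
      pose proof (Rmin_l e1 e2). pose proof (Rmin_r e1 e2).
      intros y [r [Hr Hy]]. split; [apply H1 | apply H2]; exists r; (split; [lra|]);
        intros psi Hpsi; apply Hy;
        (destruct Hpsi as [Hin|Hn]; [left; apply in_or_app; auto | right; exact Hn]).
  - intros I F HF x [j Hj]. destruct (HF j x Hj) as [P [G [e [He H]]]].
    exists P. split; auto. exists e. split; auto. intros y Hy. exists j. auto.
Defined.

Section Family.
Variable Phi : list (L -> R).
Hypothesis Phi_tau : forall phi, In phi Phi -> tau_functional phi.

Lemma nu_family_tau psi : nu_family Phi psi -> tau_functional psi.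
Proof.
  intros [Hin|[n ->]]; [auto|]. split; [apply coeff_linear | apply coeff_continuous].
Qed.

Lemma nu_family_bounded x : exists M, 0 <= M /\ forall psi, nu_family Phi psi -> Rabs (psi x) <= M.
Proof.
  destruct (list_functionals_bounded Phi x) as [M2 [HM2 H2]].
  destruct (coeff_bounded VL tau i Hfree x) as [M1 H1].
  pose proof (Rabs_pos M1). pose proof (Rle_abs M1).
  exists (M2 + Rabs M1). split; [lra|].
  intros psi [Hin|[n ->]]; [specialize (H2 _ Hin) | specialize (H1 n)]; lra.
Qed.

Lemma nu_ball_radius_nonneg x y r :
  (forall psi, nu_family Phi psi -> Rabs (psi y - psi x) <= r) -> 0 <= r.
Proof.
  intro H. pose proof (H (coeff 0) (or_intror (ex_intro _ 0%nat eq_refl))).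
  pose proof (Rabs_pos (coeff 0 y - coeff 0 x)). lra.
Qed.

Lemma nu_ball_center x eps : eps > 0 -> nu_ball Phi x eps x.
Proof. intro He. exists 0. split; [lra|]. intros. rewrite Rminus_diag, Rabs_R0; lra. Qed.

Lemma nu_ball_open x eps : open nu (nu_ball Phi x eps).
Proof.
  intros y [r [Hr Hy]]. exists Phi. split; auto. exists (eps - r). split; [lra|].
  intros z [r' [Hr' Hz]]. exists (r + r'). split; [lra|].
  intros psi Hpsi. specialize (Hy psi Hpsi). specialize (Hz psi Hpsi).
  pose proof (Rabs_triang (psi z - psi y) (psi y - psi x)).
  replace (psi z - psi y + (psi y - psi x)) with (psi z - psi x) in H by ring. lra.
Qed.

Lemma nu_ball_zero_of_bound y r eps :
  r < eps -> (forall psi, nu_family Phi psi -> Rabs (psi y) <= r) -> nu_ball Phi (vzero VL) eps y.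
Proof.
  intros Hr H. exists r. split; [exact Hr|]. intros psi Hpsi.
  rewrite (lf_0 VL psi (proj1 (nu_family_tau psi Hpsi))), Rminus_0_r. auto.
Qed.

Lemma nu_ball_zero_convex eps : convex VL (nu_ball Phi (vzero VL) eps).
Proof.
  intros x y t [r1 [Hr1 Hx]] [r2 [Hr2 Hy]] Ht. exists (Rmax r1 r2).
  split; [apply Rmax_lub_lt; auto|].
  intros psi Hpsi. destruct (nu_family_tau psi Hpsi) as [Hl _].
  specialize (Hx _ Hpsi). specialize (Hy _ Hpsi). rewrite (lf_0 VL psi Hl), Rminus_0_r in *.
  rewrite (proj1 Hl), !(proj2 Hl).
  pose proof (Rabs_convex_comb t (psi x) (psi y) Ht).
  pose proof (Rmax_l r1 r2). pose proof (Rmax_r r1 r2).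
  assert (t * Rabs (psi x) <= t * Rmax r1 r2) by (apply Rmult_le_compat_l; lra).
  assert ((1 - t) * Rabs (psi y) <= (1 - t) * Rmax r1 r2) by (apply Rmult_le_compat_l; lra).
  lra.
Qed.

End Family.

Lemma nu_add_continuous : add_continuous VL nu.
Proof.
  intros x y W HW Wxy. destruct (HW _ Wxy) as [P [G [e [He H]]]].
  exists (nu_ball P x (e / 2)), (nu_ball P y (e / 2)).
  split; [apply nu_ball_open; auto|]. split; [apply nu_ball_center; lra|].
  split; [apply nu_ball_open; auto|]. split; [apply nu_ball_center; lra|].
  intros u v [r1 [Hr1 Hu]] [r2 [Hr2 Hv]]. apply H. exists (r1 + r2). split; [lra|].
  intros psi Hpsi. destruct (nu_family_tau P G psi Hpsi) as [[Ha _] _].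
  rewrite !Ha. specialize (Hu _ Hpsi). specialize (Hv _ Hpsi).
  pose proof (Rabs_triang (psi u - psi x) (psi v - psi y)).
  replace (psi u - psi x + (psi v - psi y)) with (psi u + psi v - (psi x + psi y)) in H0
    by ring. lra.
Qed.

Lemma nu_scal_continuous : scal_continuous VL nu.
Proof.
  intros a x W HW Wax. destruct (HW _ Wax) as [P [G [e [He H]]]].
  destruct (nu_family_bounded P x) as [M [HM HMb]].
  pose proof (Rabs_pos a).
  exists (Rmin 1 (e / (2 * (M + 1)))), (nu_ball P x (e / (2 * (Rabs a + 1)))).
  assert (0 < e / (2 * (M + 1))) by (apply Rdiv_lt_0_compat; lra).
  assert (0 < e / (2 * (Rabs a + 1))) by (apply Rdiv_lt_0_compat; lra).
  split; [apply Rmin_glb_lt; lra|]. split; [apply nu_ball_open; auto|].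
  split; [apply nu_ball_center; lra|].
  intros b u Hb [r [Hr Hu]]. apply H.
  pose proof (nu_ball_radius_nonneg P _ _ _ Hu).
  exists (Rabs b * r + Rabs (b - a) * M). split; [apply scal_continuity_bound; auto|].
  intros psi Hpsi. destruct (nu_family_tau P G psi Hpsi) as [[_ Hs] _]. rewrite !Hs.
  pose proof (Rabs_scal_diff a b (psi u) (psi x)).
  specialize (Hu _ Hpsi). specialize (HMb _ Hpsi).
  pose proof (Rabs_pos b). pose proof (Rabs_pos (b - a)).
  assert (Rabs b * Rabs (psi u - psi x) <= Rabs b * r) by (apply Rmult_le_compat_l; auto).
  assert (Rabs (b - a) * Rabs (psi x) <= Rabs (b - a) * M) by (apply Rmult_le_compat_l; auto).
  lra.
Qed.

Lemma nu_locally_convex : locally_convex VL nu.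
Proof.
  split; [split; [exact nu_add_continuous | exact nu_scal_continuous]|].
  intros W HW W0. destruct (HW _ W0) as [P [G [e [He H]]]].
  exists (nu_ball P (vzero VL) e). split; [apply nu_ball_zero_convex; auto|].
  split; [|exact H]. exists (nu_ball P (vzero VL) e).
  split; [apply nu_ball_open; auto | split; [apply nu_ball_center; lra | auto]].
Qed.

Lemma nu_vector : vector_topology VL nu.
Proof. exact (proj1 nu_locally_convex). Qed.

Lemma tau_continuous_nu_continuous f : tau_functional f -> continuous nu R_topology f.
Proof.
  intros Gf V HV x Vx. destruct (HV _ Vx) as [e [He HeV]].
  exists (f :: nil). split; [intros phi [<-|[]]; exact Gf|].
  exists e. split; auto. intros y [r [Hr Hy]]. apply HeV.
  specialize (Hy f (or_introl (or_introl eq_refl))). lra.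
Qed.

Lemma list_s_diff_converges Phi : (forall phi, In phi Phi -> tau_functional phi) ->
  forall eta, eta > 0 -> exists N, forall phi, In phi Phi ->
    forall n, (N <= n)%nat -> Rabs (phi (s_diff n)) < eta.
Proof.
  induction Phi as [|f Phi IH]; intros G eta He.
  - exists 0%nat. intros phi [].
  - destruct (IH (fun phi Hin => G phi (or_intror Hin)) eta He) as [N1 H1].
    destruct (G f (or_introl eq_refl)) as [Hl Hc].
    destruct (s_diff_converges VL tau i Hfree f Hl Hc eta He) as [N2 H2].
    exists (Nat.max N1 N2). intros phi [<-|Hin] n Hn.
    + rewrite <- (Rminus_0_r (f (s_diff n))). apply H2. lia.
    + apply H1; auto. lia.
Qed.

(* Adding [+- s_diff n] for [n] beyond the support of [v] and beyond the point where the
   [phi]s are [eta]-small raises [f] by [eps] and the [phi]s by at most [eta], while the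
   coefficients of [v] stay in [[-1, 1]]. *)
Lemma staircase f Phi eps eta :
  linear_functional VL f -> (forall phi, In phi Phi -> tau_functional phi) -> eta > 0 ->
  (forall N, exists n, (N <= n)%nat /\ eps <= Rabs (f (s_diff n))) ->
  forall k : nat, exists v, INR k * eps <= f v /\
    (forall phi, In phi Phi -> Rabs (phi v) <= INR k * eta) /\
    (forall m, Rabs (coeff m v) <= 1).
Proof.
  intros Hl G Heta Hinf.
  destruct (list_s_diff_converges Phi G eta Heta) as [N0 HN0].
  enough (Hsupp : forall k : nat, exists v M, INR k * eps <= f v /\
             (forall phi, In phi Phi -> Rabs (phi v) <= INR k * eta) /\
             (forall m, Rabs (coeff m v) <= 1) /\ (forall m, (M <= m)%nat -> coeff m v = 0)).
  { intro k. destruct (Hsupp k) as [v [_ [H1 [H2 [H3 _]]]]]. exists v. auto. }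
  induction k as [|k IH].
  - exists (vzero VL), 0%nat. simpl. rewrite (lf_0 VL f Hl).
    split; [lra|]. split; [|split].
    + intros phi Hin. rewrite (lf_0 VL phi (proj1 (G phi Hin))), Rabs_R0. lra.
    + intro m. rewrite (lf_0 VL _ (coeff_linear m)), Rabs_R0. lra.
    + intros m _. apply (lf_0 VL _ (coeff_linear m)).
  - destruct IH as [v [M [H1 [H2 [H3 H4]]]]].
    destruct (Hinf (Nat.max M N0)) as [n [Hn1 Hn2]].
    set (a := f (s_diff n)) in Hn2.
    set (sg := if Rle_dec 0 a then 1 else -1).
    assert (Hsa : sg * a = Rabs a)
      by (unfold sg; destruct (Rle_dec 0 a); [rewrite Rabs_pos_eq | rewrite Rabs_left]; lra).
    assert (Hsg : Rabs sg = 1)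
      by (unfold sg; destruct (Rle_dec 0 a); [apply Rabs_R1 | rewrite Rabs_left; lra]).
    exists (vadd VL v (vscal VL sg (s_diff n))), (S n). rewrite S_INR.
    split; [|split; [|split]].
    + rewrite (proj1 Hl), (proj2 Hl). fold a. lra.
    + intros phi Hin. destruct (G phi Hin) as [Hpl _]. rewrite (proj1 Hpl), (proj2 Hpl).
      pose proof (Rabs_triang (phi v) (sg * phi (s_diff n))).
      rewrite Rabs_mult, Hsg in H. specialize (H2 _ Hin).
      assert (Rabs (phi (s_diff n)) < eta) by (apply HN0; auto; lia). lra.
    + intro m. rewrite (proj1 (coeff_linear m)), (proj2 (coeff_linear m)), coeff_s_diff.
      destruct (Nat.eq_dec n m) as [<-|Hnm].
      * rewrite H4, Rplus_0_l, Rmult_1_r, Hsg by lia. lra.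
      * rewrite Rmult_0_r, Rplus_0_r. apply H3.
    + intros m Hm. rewrite (proj1 (coeff_linear m)), (proj2 (coeff_linear m)), coeff_s_diff.
      destruct (Nat.eq_dec n m); [lia|]. rewrite H4 by lia. ring.
Qed.

Lemma nu_continuous_tau_continuous f :
  linear_functional VL f -> continuous nu R_topology f -> continuous tau R_topology f.
Proof.
  intros Hl Hc. apply (free_continuous_of_comp VL tau i Hfree f Hl), s_continuous_of_seq.
  intros eps He.
  enough (Hd : exists N, forall n, (N <= n)%nat -> Rabs (f (s_diff n)) < eps).
  { destruct Hd as [N HN]. exists N. intros n Hn. specialize (HN n Hn).
    unfold s_diff in HN. rewrite lf_sub in HN by exact Hl. exact HN. }
  apply NNPP. intro Hn.
  assert (Hinf : forall N, exists n, (N <= n)%nat /\ eps <= Rabs (f (s_diff n))).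
  { intro N. apply NNPP. intro Hn2. apply Hn. exists N. intros n Hn3.
    apply Rnot_le_lt. intro Hle. apply Hn2. exists n. auto. }
  assert (Hf0 : f (vzero VL) = 0) by (apply lf_0; auto).
  destruct (Hc _ (R_ball_open (f (vzero VL)) eps) (vzero VL)) as [P [G [eta [Heta Hb]]]];
    [cbv beta; rewrite Rminus_diag, Rabs_R0; lra|].
  destruct (INR_archimed eta 2 Heta) as [K HK].
  assert (HK0 : 0 < INR K) by nra.
  destruct (staircase f P eps (eta / 2) Hl G ltac:(lra) Hinf K) as [v [Hfv [HPv Hcv]]].
  assert (Hscale : forall psi, linear_functional VL psi ->
                   Rabs (psi (vscal VL (/ INR K) v)) = Rabs (psi v) / INR K).
  { intros psi Hpsi. rewrite (proj2 Hpsi), Rabs_mult, Rabs_inv, (Rabs_pos_eq (INR K)) by lra.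
    unfold Rdiv. ring. }
  assert (Hw : nu_ball P (vzero VL) eta (vscal VL (/ INR K) v)).
  { apply (nu_ball_zero_of_bound P G _ (eta / 2)); [lra|].
    intros psi Hpsi. rewrite Hscale by exact (proj1 (nu_family_tau P G psi Hpsi)).
    apply (Rmult_le_reg_r (INR K)); [lra|]. unfold Rdiv. rewrite Rmult_assoc, Rinv_l by lra.
    destruct Hpsi as [Hin|[m ->]]; [specialize (HPv _ Hin) | specialize (Hcv m)]; nra. }
  specialize (Hb _ Hw). cbv beta in Hb. rewrite Hf0, Rminus_0_r, Hscale in Hb by exact Hl.
  apply (Rmult_lt_compat_r (INR K)) in Hb; [|lra].
  replace (Rabs (f v) / INR K * INR K) with (Rabs (f v)) in Hb by (field; lra).
  pose proof (Rle_abs (f v)). nra.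
Qed.

Lemma nu_compatible : lc_compatible VL tau nu.
Proof.
  intros f Hl. split.
  - intro Hc. apply tau_continuous_nu_continuous. split; auto.
  - apply nu_continuous_tau_continuous, Hl.
Qed.

(* [s_diff n] tends to [0] for [tau], but lies on the sphere of radius [1] of the
   seminorm [sup_n |coeff n|]. *)
Lemma nu_not_coarser : ~ coarser nu tau.
Proof.
  intro Hco.
  assert (HU : open tau (nu_ball nil (vzero VL) 1)) by (apply Hco, nu_ball_open; intros phi []).
  pose proof (i_continuous VL tau i Hfree _
                (affine_open VL tau (tau_vector VL tau i Hfree) _ 1 (vopp VL (i s_zero)) HU)) as HO.
  destruct (proj1 (s_open_iff _) HO s_zero) as [d [Hd Hdy]].
  { cbv beta. rewrite (vadd_opp _ VL), (vscal_1 _ VL). apply nu_ball_center. lra. }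
  destruct (s_seq_small d Hd) as [N HN].
  destruct (Hdy (s_seq N)) as [r [Hr Hy]].
  - cbn [proj1_sig s_seq s_zero]. rewrite Rminus_0_r, Rabs_pos_eq; [apply HN; auto|].
    left; apply s_seq_pos.
  - specialize (Hy (coeff N) (or_intror (ex_intro _ N eq_refl))).
    rewrite (vscal_1 _ VL) in Hy. fold (s_diff N) in Hy.
    rewrite coeff_s_diff, (lf_0 VL _ (coeff_linear N)) in Hy.
    destruct (Nat.eq_dec N N); [|lia]. rewrite Rminus_0_r, Rabs_R1 in Hy. lra.
Qed.

Lemma nu_locally_quasi_convex : locally_quasi_convex VL nu.
Proof.
  intros W HW W0. destruct (HW _ W0) as [P [G [e [He H]]]].
  exists (fun y => forall psi, nu_family P psi -> Rabs (psi y) <= e / 2). split; [|split].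
  - apply polar_ball_quasi_convex; [lra|]. intros psi Hpsi.
    pose proof (nu_family_tau P G psi Hpsi) as Gp.
    split; [exact (proj1 Gp) | apply tau_continuous_nu_continuous, Gp].
  - exists (nu_ball P (vzero VL) (e / 2)).
    split; [apply nu_ball_open; auto|]. split; [apply nu_ball_center; lra|].
    intros y [r [Hr Hy]] psi Hpsi. specialize (Hy _ Hpsi).
    rewrite (lf_0 VL _ (proj1 (nu_family_tau P G psi Hpsi))), Rminus_0_r in Hy. lra.
  - intros y Hy. apply H. apply (nu_ball_zero_of_bound P G _ (e / 2)); [lra | exact Hy].
Qed.

End Nu.

Theorem theorem1p1 :
  forall (L : Type) (VL : vector_space L) (tau : topology L) (i : s_pt -> L),
    free_lcs s_topology VL tau i ->
    ~ mackey_space VL tau /\ ~ mackey_group VL tau.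
Proof.
  intros L VL tau i Hfree.
  pose proof (nu_not_coarser VL tau i Hfree) as Hstrict.
  split; intro Hmackey; apply Hstrict, Hmackey.
  - apply nu_locally_convex.
  - apply nu_compatible.
  - apply vector_group_topology, nu_vector.
  - apply nu_locally_quasi_convex.
  - apply group_compatible_of_lc_compatible;
      [exact (tau_vector VL tau i Hfree) | apply nu_vector | apply nu_compatible].
Qed.
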